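(* Let $Q=ABCD$ be a non-degenerate convex quadrangle of perimeter $2$ with $s_1=|AB|$, $s_2=|BC|$, $s_3=|CD|$, $s_4=|DA|$. Let $B_1$ be the point lying in the same open half-plane with respect to the line $AC$ as $B$ with $|B_1A|=(s_2+s_3+s_4-s_1)/2$ and $|B_1C|=(s_1+s_3+s_4-s_2)/2$, and let $D_1$ be the point lying in the same open half-plane with respect to $AC$ as $D$ with $|D_1A|=(s_1+s_2+s_3-s_4)/2$ and $|D_1C|=(s_1+s_2+s_4-s_3)/2$. Then these points exist and the quadrangle $AB_1CD_1$ is congruent to the dual quadrangle $Q^\circ=KLMN$, via an isometry sending $K,L,M,N$ to $A,B_1,C,D_1$ respectively.
   Context: Identify $\mathbb{R}^2$ with $\mathbb{C}$. A quadrangle $Q=ABCD$ is an ordered 4-tuple of points $A,B,C,D\in\mathbb{C}$: $A$ is the first vertex and the order $A\to B\to C\to D\to A$ is the direction of traversal. Its edge vectors are $z_1=B-A$, $z_2=C-B$, $z_3=D-C$, $z_4=A-D$, so $z_1+z_2+z_3+z_4=0$; its perimeter is $|z_1|+|z_2|+|z_3|+|z_4|$. $Q$ is non-degenerate if each pair of consecutive edge vectors $(z_1,z_2),(z_2,z_3),(z_3,z_4),(z_4,z_1)$ consists of nonzero, non-collinear vectors. A non-degenerate quadrangle is convex if no two opposite edges intersect and all its interior angles are less than $\pi$. Associated plane: for a non-degenerate $Q$ of perimeter $2$, choose $u_1,\dots,u_4\in\mathbb{C}$ with $u_k^2=z_k$, where $u_1$ is an arbitrary square root of $z_1$ and for $k=1,2,3$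 the sign of $u_{k+1}$ is chosen so that $\operatorname{Im}(\overline{u_k}u_{k+1})$ has the same sign as $\operatorname{Im}(\overline{z_k}z_{k+1})$. Write $u_k=a_k+i b_k$ and $\bar a=(a_1,a_2,a_3,a_4)$, $\bar b=(b_1,b_2,b_3,b_4)$; these are orthonormal in $\mathbb{R}^4$. Let $\Pi=\operatorname{span}(\bar a,\bar b)$ and $\Pi^\perp$ its orthogonal complement. Dual quadrangle: choose an orthonormal basis $(\bar c,\bar d)$ of $\Pi^\perp$, put $w_k=(c_k+i d_k)^2$; then $\sum_k w_k=0$ and $\sum_k|w_k|=2$. The dual quadrangle $Q^\circ=KLMN$ is the quadrangle with $L-K=w_1$, $M-L=w_2$, $N-M=w_3$, $K-N=w_4$. It is determined up to rotation, reflection and translation. *)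

(* Stdlib reals. The plane C = R^2 is modelled as pairs (x, y) : R * R,
   with x + i y identified with (x, y). *)
From Stdlib Require Import Reals.
Open Scope R_scope.

Definition pt : Type := (R * R)%type.
Definition px (p : pt) : R := fst p.
Definition py (p : pt) : R := snd p.
Definition padd (p q : pt) : pt := (px p + px q, py p + py q).
Definition psub (p q : pt) : pt := (px p - px q, py p - py q).
(* Im (conj p * q) *)
Definition cross (p q : pt) : R := px p * py q - py p * px q.
Definition csq (p : pt) : pt := (px p * px p - py p * py p, 2 * px p * py p).
Definition pnorm (p : pt) : R := sqrt (px p ^ 2 + py p ^ 2).
Definition dist (p q : pt) : R := pnorm (psub p q).
Definition origin : pt := (0, 0).

Definition z1 (A B C D : pt) : pt := psub B A.
Definition z2 (A B C D : pt) : pt := psub C B.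
Definition z3 (A B C D : pt) : pt := psub D C.
Definition z4 (A B C D : pt) : pt := psub A D.

Definition perimeter (A B C D : pt) : R :=
  pnorm (z1 A B C D) + pnorm (z2 A B C D) + pnorm (z3 A B C D) + pnorm (z4 A B C D).

Definition nondegenerate (A B C D : pt) : Prop :=
  let w1 := z1 A B C D in let w2 := z2 A B C D in
  let w3 := z3 A B C D in let w4 := z4 A B C D in
  w1 <> origin /\ w2 <> origin /\ w3 <> origin /\ w4 <> origin /\
  cross w1 w2 <> 0 /\ cross w2 w3 <> 0 /\ cross w3 w4 <> 0 /\ cross w4 w1 <> 0.

Definition on_segment (P X Y : pt) : Prop :=
  exists t : R, 0 <= t <= 1 /\
    P = (px X + t * (px Y - px X), py X + t * (py Y - py X)).

Definition segments_meet (X Y Z W : pt) : Prop :=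
  exists P : pt, on_segment P X Y /\ on_segment P Z W.

Definition convex_quad (A B C D : pt) : Prop :=
  let w1 := z1 A B C D in let w2 := z2 A B C D in
  let w3 := z3 A B C D in let w4 := z4 A B C D in
  nondegenerate A B C D /\
  ~ segments_meet A B C D /\ ~ segments_meet B C D A /\
  ((0 < cross w1 w2 /\ 0 < cross w2 w3 /\ 0 < cross w3 w4 /\ 0 < cross w4 w1) \/
   (cross w1 w2 < 0 /\ cross w2 w3 < 0 /\ cross w3 w4 < 0 /\ cross w4 w1 < 0)).

(* KLMN is a dual quadrangle of ABCD (for some admissible choice of the square
   roots u_k and of the orthonormal basis (c, d) of Pi^perp). *)
Definition is_dual (A B C D K L M N : pt) : Prop :=
  let w1 := z1 A B C D in let w2 := z2 A B C D in
  let w3 := z3 A B C D in let w4 := z4 A B C D in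
  exists u1 u2 u3 u4 : pt,
    csq u1 = w1 /\ csq u2 = w2 /\ csq u3 = w3 /\ csq u4 = w4 /\
    (* sign(Im(conj u_k u_{k+1})) = sign(Im(conj z_k z_{k+1})), k = 1,2,3 *)
    0 < cross u1 u2 * cross w1 w2 /\
    0 < cross u2 u3 * cross w2 w3 /\
    0 < cross u3 u4 * cross w3 w4 /\
    let a1 := px u1 in let a2 := px u2 in let a3 := px u3 in let a4 := px u4 in
    let b1 := py u1 in let b2 := py u2 in let b3 := py u3 in let b4 := py u4 in
    exists c1 c2 c3 c4 d1 d2 d3 d4 : R,
      c1*c1 + c2*c2 + c3*c3 + c4*c4 = 1 /\
      d1*d1 + d2*d2 + d3*d3 + d4*d4 = 1 /\
      c1*d1 + c2*d2 + c3*d3 + c4*d4 = 0 /\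
      (* (c, d) in Pi^perp, Pi = span(a, b) *)
      c1*a1 + c2*a2 + c3*a3 + c4*a4 = 0 /\
      c1*b1 + c2*b2 + c3*b3 + c4*b4 = 0 /\
      d1*a1 + d2*a2 + d3*a3 + d4*a4 = 0 /\
      d1*b1 + d2*b2 + d3*b3 + d4*b4 = 0 /\
      psub L K = csq (c1, d1) /\ psub M L = csq (c2, d2) /\
      psub N M = csq (c3, d3) /\ psub K N = csq (c4, d4).

Definition same_open_side (X Y P Q : pt) : Prop :=
  0 < cross (psub Y X) (psub P X) * cross (psub Y X) (psub Q X).

Definition B1_spec (A B C D B1 : pt) : Prop :=
  let s1 := dist A B in let s2 := dist B C in
  let s3 := dist C D in let s4 := dist D A in
  same_open_side A C B1 B /\
  dist B1 A = (s2 + s3 + s4 - s1) / 2 /\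
  dist B1 C = (s1 + s3 + s4 - s2) / 2.

Definition D1_spec (A B C D D1 : pt) : Prop :=
  let s1 := dist A B in let s2 := dist B C in
  let s3 := dist C D in let s4 := dist D A in
  same_open_side A C D1 D /\
  dist D1 A = (s1 + s2 + s3 - s4) / 2 /\
  dist D1 C = (s1 + s2 + s4 - s3) / 2.

Definition isometry (f : pt -> pt) : Prop :=
  forall p q : pt, dist (f p) (f q) = dist p q.

(* Perimeter 2 makes the vectors a, b of real and imaginary parts of the u_k orthonormal, so
   (a, b, c, d) is an orthogonal 4x4 matrix and its rows (u_k, v_k) are orthonormal as well.
   Hence |v_k|^2 = 1 - |u_k|^2 and v_k.v_l = -u_k.u_l: the dual has sides 1 - s_k, which are
   the prescribed distances of B1 and D1 to A and C; its diagonal KM has the length of AC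
   because |v^2 + w^2|^2 = (|v|^2 - |w|^2)^2 + 4 (v.w)^2; and L, N lie on opposite sides of KM
   as B, D do of AC, because Im(conj(v^2) w^2) = 2 (v.w) (v x w) and the planar Binet-Cauchy
   formula turns the products of cross products into dot products.  An isometry matching KM
   with AC, with the orientation chosen to put L on the side of B1, then sends L to B1 and N
   to D1, since two circles meet in at most one point on each side of the line of centres. *)

From Pilot Require Import Defs.
From Stdlib Require Import Reals Lra Psatz.
(* [Reals] exports its own [dist]. *)
Import Defs.
Open Scope R_scope.

(** * Plane geometry *)

Definition pdot (p q : pt) : R := px p * px q + py p * py q.

Ltac coords :=
  repeat match goal with p : pt |- _ => destruct p end;
  unfold dist, pnorm, pdot, cross, csq, padd, psub, px, py in *; cbn [fst snd] in *.

Lemma pnorm_nonneg p : 0 <= pnorm p.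
Proof. apply sqrt_pos. Qed.

Lemma pnorm_sqr p : pnorm p * pnorm p = pdot p p.
Proof. unfold pnorm, pdot. rewrite sqrt_sqrt; nra. Qed.

Lemma pnorm_unique p r : 0 <= r -> pdot p p = r * r -> pnorm p = r.
Proof.
  intros Hr Hp. unfold pnorm. rewrite <- sqrt_square by exact Hr.
  f_equal. unfold pdot in Hp. lra.
Qed.

Lemma pnorm_ext p q : pdot p p = pdot q q -> pnorm p = pnorm q.
Proof. intro H. apply pnorm_unique; [apply pnorm_nonneg|]. now rewrite pnorm_sqr. Qed.

Lemma pnorm_csq u : pnorm (csq u) = pdot u u.
Proof. apply pnorm_unique; coords; nra. Qed.

Lemma dist_sym X Y : dist X Y = dist Y X.
Proof. apply pnorm_ext. coords. ring. Qed.

Lemma lagrange_identity p q : pdot p p * pdot q q = pdot p q ^ 2 + cross p q ^ 2.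
Proof. coords. ring. Qed.

Lemma cross_csq u v : cross (csq u) (csq v) = 2 * pdot u v * cross u v.
Proof. coords. ring. Qed.

Lemma pdot_csq_add u v :
  pdot (padd (csq u) (csq v)) (padd (csq u) (csq v)) = (pdot u u - pdot v v) ^ 2 + 4 * pdot u v ^ 2.
Proof. coords. ring. Qed.

Lemma cross_mul_cross u1 u2 u3 u4 :
  cross u1 u2 * cross u3 u4 = pdot u1 u3 * pdot u2 u4 - pdot u1 u4 * pdot u2 u3.
Proof. coords. ring. Qed.

Lemma Rlt_of_sqr_lt x y : 0 <= y -> x * x < y * y -> x < y.
Proof. intros. nra. Qed.

Lemma pnorm_add_lt x y : cross x y <> 0 -> pnorm (padd x y) < pnorm x + pnorm y.
Proof.
  intro Hxy.
  pose proof (pnorm_nonneg x); pose proof (pnorm_nonneg y).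
  assert (Hdot : pdot x y < pnorm x * pnorm y).
  { apply Rlt_of_sqr_lt; [nra|].
    assert (0 < cross x y ^ 2) by nra.
    replace ((pnorm x * pnorm y) * (pnorm x * pnorm y)) with (pdot x x * pdot y y)
      by (rewrite <- !pnorm_sqr; ring).
    rewrite lagrange_identity. nra. }
  apply Rlt_of_sqr_lt; [nra|].
  rewrite pnorm_sqr.
  replace (pdot (padd x y) (padd x y)) with (pdot x x + 2 * pdot x y + pdot y y) by (coords; ring).
  rewrite <- !pnorm_sqr. nra.
Qed.

Lemma dist_lt_triangle X Y Z : cross (psub Y X) (psub Z X) <> 0 -> dist X Z < dist X Y + dist Y Z.
Proof.
  intro H.
  replace (dist X Z) with (pnorm (padd (psub X Y) (psub Y Z))) by (apply pnorm_ext; coords; ring).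
  apply pnorm_add_lt. intro E. apply H. coords. lra.
Qed.

Lemma triangle_strict A B C : cross (psub C A) (psub B A) <> 0 ->
  dist A C < dist A B + dist B C /\ dist A B < dist A C + dist B C /\
  dist B C < dist A B + dist A C.
Proof.
  intro H. split; [|split].
  - apply dist_lt_triangle. intro E. apply H. coords. lra.
  - rewrite (dist_sym B C). apply dist_lt_triangle. intro E. apply H. coords. lra.
  - rewrite (dist_sym A B). apply dist_lt_triangle. intro E. apply H. coords. lra.
Qed.

Lemma circles_meet (A C : pt) (r1 r2 sg : R) :
  r1 - r2 < dist A C -> r2 - r1 < dist A C -> dist A C < r1 + r2 -> sg <> 0 ->
  exists P, dist P A = r1 /\ dist P C = r2 /\ 0 < cross (psub C A) (psub P A) * sg.
Proof.
  intros H1 H2 H3 Hsg.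
  assert (Hd2 := pnorm_sqr (psub A C)). fold (dist A C) in Hd2.
  set (d := dist A C) in *.
  destruct A as [xa ya], C as [xc yc]. unfold pdot, psub, px, py in Hd2; cbn [fst snd] in Hd2.
  set (vx := xc - xa). set (vy := yc - ya).
  set (dd := vx ^ 2 + vy ^ 2).
  assert (Hdd : d * d = dd) by (rewrite Hd2; unfold dd, vx, vy; ring).
  assert (Hdpos : 0 < dd) by (rewrite <- Hdd; nra).
  set (t := (dd + r1 * r1 - r2 * r2) / (2 * dd)).
  set (h := r1 * r1 / dd - t * t).
  assert (Hh : 0 < h).
  { (* Heron's formula for the triangle with sides d, r1, r2 *)
    assert (Hheron : 4 * dd * dd * h = (d + r1 - r2) * (d - r1 + r2) * (r1 + r2 - d) * (r1 + r2 + d)).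
    { unfold h, t. rewrite <- Hdd. field. nra. }
    assert (0 < (d + r1 - r2) * (d - r1 + r2)) by nra.
    assert (0 < (r1 + r2 - d) * (r1 + r2 + d)) by nra.
    nra. }
  set (s := (if Rlt_dec 0 sg then 1 else -1) * sqrt h).
  assert (Hs : s * s = h).
  { unfold s. pose proof (sqrt_sqrt h (Rlt_le _ _ Hh)). destruct (Rlt_dec 0 sg); nra. }
  assert (Hssg : 0 < s * sg).
  { unfold s. pose proof (sqrt_lt_R0 h Hh). destruct (Rlt_dec 0 sg); nra. }
  exists (xa + t * vx - s * vy, ya + t * vy + s * vx). split; [|split].
  - apply pnorm_unique; [nra|]. unfold pdot, psub, px, py; cbn [fst snd].
    transitivity ((t * t + s * s) * dd); [unfold dd; ring|].
    rewrite Hs. unfold h. field. lra.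
  - apply pnorm_unique; [nra|]. unfold pdot, psub, px, py; cbn [fst snd].
    transitivity (((t - 1) * (t - 1) + s * s) * dd); [unfold dd, vx, vy; ring|].
    rewrite Hs. unfold h, t. field. lra.
  - unfold cross, psub, px, py; cbn [fst snd]. fold vx vy.
    replace (vx * (ya + t * vy + s * vx - ya) - vy * (xa + t * vx - s * vy - xa)) with (s * dd)
      by (unfold dd; ring).
    nra.
Qed.

Lemma pt_eq_of_pdot_cross v p q : v <> origin ->
  pdot v p = pdot v q -> cross v p = cross v q -> p = q.
Proof.
  intros Hv Hdot Hcr. destruct v as [vx vy], p as [x y], q as [x' y'].
  unfold pdot, cross, px, py in *; cbn [fst snd] in *.
  assert (Hn : 0 < vx * vx + vy * vy).
  { destruct (Req_dec vx 0), (Req_dec vy 0); [subst; now destruct Hv| nra..]. }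
  assert (Hd : vx * (x - x') + vy * (y - y') = 0) by lra.
  assert (Hc : vx * (y - y') - vy * (x - x') = 0) by lra.
  assert (Ex : (vx * vx + vy * vy) * (x - x') =
               vx * (vx * (x - x') + vy * (y - y')) - vy * (vx * (y - y') - vy * (x - x'))) by ring.
  assert (Ey : (vx * vx + vy * vy) * (y - y') =
               vy * (vx * (x - x') + vy * (y - y')) + vx * (vx * (y - y') - vy * (x - x'))) by ring.
  rewrite Hd, Hc in Ex, Ey.
  f_equal; apply (Rmult_eq_reg_l (vx * vx + vy * vy)); lra.
Qed.

Lemma Req_of_sqr_same_sign x y : x * x = y * y -> 0 < x * y -> x = y.
Proof.
  intros Hsq Hxy.
  assert (H : (x - y) * (x + y) = 0) by (transitivity (x * x - y * y); [ring | lra]).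
  apply Rmult_integral in H as [H | H]; [lra|].
  replace y with (- x) in Hxy by lra. nra.
Qed.

Lemma circles_meet_unique (A C P P' : pt) : 0 < dist A C ->
  dist P A = dist P' A -> dist P C = dist P' C ->
  0 < cross (psub C A) (psub P A) * cross (psub C A) (psub P' A) -> P = P'.
Proof.
  intros HAC HA HC Hside.
  set (v := psub C A).
  assert (Hsq : forall X Y Z W, dist X Y = dist Z W ->
                pdot (psub X Y) (psub X Y) = pdot (psub Z W) (psub Z W)).
  { intros X Y Z W E. rewrite <- !pnorm_sqr. unfold dist in E. now rewrite E. }
  apply Hsq in HA, HC.
  assert (Hdot : pdot v (psub P A) = pdot v (psub P' A)).
  { unfold v. coords. nra. }
  assert (Hcross : cross v (psub P A) = cross v (psub P' A)).
  { apply Req_of_sqr_same_sign; [|exact Hside].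
    pose proof (lagrange_identity v (psub P A)). pose proof (lagrange_identity v (psub P' A)).
    rewrite HA, Hdot in *. nra. }
  assert (Hv : v <> origin).
  { intro E. assert (Hz : dist A C = 0).
    { apply pnorm_unique; [lra|]. unfold v in E. coords. injection E. nra. }
    lra. }
  assert (E := pt_eq_of_pdot_cross _ _ _ Hv Hdot Hcross). coords. injection E. intros. f_equal; lra.
Qed.

(* The rotation taking [M - K] to [C - A], composed with a reflection when [sg = -1]:
   [p] is written in the frame of [e = M - K] and rebuilt in the frame of [v = C - A]. *)
Definition frame_map (K M A C : pt) (sg : R) (p : pt) : pt :=
  let e := psub M K in let v := psub C A in let w := psub p K in
  let t := pdot e w / pdot v v in let s := sg * cross e w / pdot v v in
  (px A + t * px v - s * py v, py A + t * py v + s * px v).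

Lemma frame_map_spec (K M A C : pt) (sg : R) : sg * sg = 1 ->
  dist M K = dist C A -> 0 < dist C A ->
  isometry (frame_map K M A C sg) /\ frame_map K M A C sg K = A /\ frame_map K M A C sg M = C /\
  forall p, cross (psub C A) (psub (frame_map K M A C sg p) A) = sg * cross (psub M K) (psub p K).
Proof.
  intros Hsg Hlen Hpos.
  assert (Hee : pdot (psub M K) (psub M K) = pdot (psub C A) (psub C A)).
  { rewrite <- !pnorm_sqr. unfold dist in Hlen. now rewrite Hlen. }
  assert (Hvv : 0 < pdot (psub C A) (psub C A)) by (rewrite <- pnorm_sqr; unfold dist in Hpos; nra).
  unfold frame_map; cbv zeta. destruct K as [xk yk], M as [xm ym], A as [xa ya], C as [xc yc].
  unfold pdot, cross, psub, px, py in *; cbn [fst snd] in *.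
  set (ex := xm - xk) in *. set (ey := ym - yk) in *.
  set (vx := xc - xa) in *. set (vy := yc - ya) in *.
  set (dd := vx * vx + vy * vy) in *.
  assert (Hdd : dd <> 0) by lra.
  split; [|split; [|split]].
  - intros [xp yp] [xq yq]. apply pnorm_ext. unfold pdot, psub, px, py; cbn [fst snd].
    set (Ep := ex * (xp - xk) + ey * (yp - yk)). set (Eq := ex * (xq - xk) + ey * (yq - yk)).
    set (Cp := ex * (yp - yk) - ey * (xp - xk)). set (Cq := ex * (yq - yk) - ey * (xq - xk)).
    transitivity (((Ep - Eq) ^ 2 + (sg * sg) * (Cp - Cq) ^ 2) / dd); [unfold dd; field; exact Hdd|].
    rewrite Hsg.
    replace ((Ep - Eq) ^ 2 + 1 * (Cp - Cq) ^ 2) with ((ex * ex + ey * ey) * ((xp - xq) ^ 2 + (yp - yq) ^ 2))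
      by (unfold Ep, Eq, Cp, Cq; ring).
    rewrite Hee. unfold dd. field. exact Hdd.
  - f_equal; unfold dd; field; exact Hdd.
  - f_equal.
    + transitivity (xa + vx * (ex * ex + ey * ey) / dd); [unfold dd; field; exact Hdd|].
      rewrite Hee. unfold dd, vx. field. exact Hdd.
    + transitivity (ya + vy * (ex * ex + ey * ey) / dd); [unfold dd; field; exact Hdd|].
      rewrite Hee. unfold dd, vy. field. exact Hdd.
  - intros [xp yp]. cbn [fst snd]. unfold dd. field. exact Hdd.
Qed.

Lemma isometry_dist_image f X Y Z : isometry f -> f X = Z -> dist (f Y) Z = dist Y X.
Proof. intros Hf HX. rewrite <- HX. apply Hf. Qed.

Lemma quadrangle_congruence (K L M N A P C Q : pt) :
  0 < dist C A -> dist M K = dist C A ->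
  dist L K = dist P A -> dist L M = dist P C -> dist N K = dist Q A -> dist N M = dist Q C ->
  cross (psub M K) (psub L K) * cross (psub M K) (psub N K) < 0 ->
  cross (psub C A) (psub P A) * cross (psub C A) (psub Q A) < 0 ->
  exists f, isometry f /\ f K = A /\ f L = P /\ f M = C /\ f N = Q.
Proof.
  intros HCA HMK HLK HLM HNK HNM Hdual Hprimal.
  set (X := cross (psub M K) (psub L K)) in *. set (Y := cross (psub C A) (psub P A)) in *.
  set (sg := if Rlt_dec 0 (X * Y) then 1 else -1).
  assert (Hsg : sg * sg = 1) by (unfold sg; destruct (Rlt_dec 0 (X * Y)); ring).
  assert (HXY : 0 < sg * X * Y).
  { assert (X * Y <> 0) by (apply Rmult_integral_contrapositive; split; intro E; rewrite E in *; lra).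
    unfold sg; destruct (Rlt_dec 0 (X * Y)); lra. }
  destruct (frame_map_spec K M A C sg Hsg HMK HCA) as (Hiso & HK & HM & Hcross).
  set (f := frame_map K M A C sg) in *.
  assert (HAC : 0 < dist A C) by now rewrite dist_sym.
  exists f. repeat split; [exact Hiso | exact HK | | exact HM | ].
  - apply (circles_meet_unique A C); [exact HAC | | |].
    + now rewrite (isometry_dist_image f K L A Hiso HK).
    + now rewrite (isometry_dist_image f M L C Hiso HM).
    + rewrite Hcross. fold X Y. nra.
  - apply (circles_meet_unique A C); [exact HAC | | |].
    + now rewrite (isometry_dist_image f K N A Hiso HK).
    + now rewrite (isometry_dist_image f M N C Hiso HM).
    + rewrite Hcross.
      set (Z := cross (psub M K) (psub N K)) in *. set (W := cross (psub C A) (psub Q A)) in *.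
      assert (HXW : sg * X * W < 0) by nra.
      assert (HXZ : (sg * X) * (sg * Z) < 0)
        by (replace ((sg * X) * (sg * Z)) with ((sg * sg) * (X * Z)) by ring; nra).
      nra.
Qed.

(** * Orthogonal 4x4 matrices *)

Definition kronecker (i j : nat) : R := if Nat.eqb i j then 1 else 0.

Definition dot4 (x y : nat -> R) : R :=
  x 0%nat * y 0%nat + x 1%nat * y 1%nat + x 2%nat * y 2%nat + x 3%nat * y 3%nat.

Definition det3 (x y z : nat -> R) (i j k : nat) : R :=
  x i * (y j * z k - y k * z j) - x j * (y i * z k - y k * z i) + x k * (y i * z j - y j * z i).

Definition det4 (a b c d : nat -> R) : R :=
  a 0%nat * det3 b c d 1 2 3 - a 1%nat * det3 b c d 0 2 3
  + a 2%nat * det3 b c d 0 1 3 - a 3%nat * det3 b c d 0 1 2.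

(* A 4x4 matrix is given by its columns [m 0, ..., m 3]. *)
Definition orthonormal4 (m : nat -> nat -> R) : Prop :=
  forall j k, (j < 4)%nat -> (k < 4)%nat -> dot4 (m j) (m k) = kronecker j k.

Definition transpose4 (m : nat -> nat -> R) : nat -> nat -> R := fun i j => m j i.

Definition gram4 (m : nat -> nat -> R) : nat -> nat -> R := fun j k => dot4 (m j) (m k).

Lemma det4_gram (m : nat -> nat -> R) :
  det4 (m 0%nat) (m 1%nat) (m 2%nat) (m 3%nat) * det4 (m 0%nat) (m 1%nat) (m 2%nat) (m 3%nat) =
  det4 (gram4 m 0%nat) (gram4 m 1%nat) (gram4 m 2%nat) (gram4 m 3%nat).
Proof. unfold det4, det3, gram4, dot4. ring. Qed.

Lemma det4_cramer a b c d x y :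
  det4 a b c d * dot4 x y =
  det4 x b c d * dot4 a y + det4 a x c d * dot4 b y + det4 a b x d * dot4 c y + det4 a b c x * dot4 d y.
Proof. unfold det4, det3, dot4. ring. Qed.

Lemma orthonormal4_det_sqr m : orthonormal4 m ->
  det4 (m 0%nat) (m 1%nat) (m 2%nat) (m 3%nat) * det4 (m 0%nat) (m 1%nat) (m 2%nat) (m 3%nat) = 1.
Proof.
  intro Hm. rewrite det4_gram. unfold det4, det3, gram4.
  rewrite !Hm by lia. unfold kronecker; cbn. ring.
Qed.

Lemma orthonormal4_parseval m : orthonormal4 m -> forall x y,
  dot4 x y = dot4 x (m 0%nat) * dot4 (m 0%nat) y + dot4 x (m 1%nat) * dot4 (m 1%nat) y
           + dot4 x (m 2%nat) * dot4 (m 2%nat) y + dot4 x (m 3%nat) * dot4 (m 3%nat) y.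
Proof.
  intros Hm x y.
  pose proof (orthonormal4_det_sqr m Hm) as HD.
  pose proof (det4_cramer (m 0%nat) (m 1%nat) (m 2%nat) (m 3%nat) x) as Hcr.
  set (D := det4 (m 0%nat) (m 1%nat) (m 2%nat) (m 3%nat)) in *.
  (* Cramer's rule tested against the columns themselves identifies its coefficients. *)
  assert (Hx : forall j, (j < 4)%nat ->
            D * dot4 x (m j) = det4 x (m 1%nat) (m 2%nat) (m 3%nat) * kronecker 0 j
                             + det4 (m 0%nat) x (m 2%nat) (m 3%nat) * kronecker 1 j
                             + det4 (m 0%nat) (m 1%nat) x (m 3%nat) * kronecker 2 j
                             + det4 (m 0%nat) (m 1%nat) (m 2%nat) x * kronecker 3 j)
    by (intros j Hj; rewrite Hcr, !Hm by lia; reflexivity).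
  pose proof (Hx 0%nat ltac:(lia)) as H0. pose proof (Hx 1%nat ltac:(lia)) as H1.
  pose proof (Hx 2%nat ltac:(lia)) as H2. pose proof (Hx 3%nat ltac:(lia)) as H3.
  unfold kronecker in H0, H1, H2, H3; cbn in H0, H1, H2, H3.
  transitivity (D * (D * dot4 x y)); [rewrite <- Rmult_assoc, HD; ring|].
  rewrite Hcr.
  transitivity ((D * D) * (dot4 x (m 0%nat) * dot4 (m 0%nat) y + dot4 x (m 1%nat) * dot4 (m 1%nat) y
           + dot4 x (m 2%nat) * dot4 (m 2%nat) y + dot4 x (m 3%nat) * dot4 (m 3%nat) y)).
  - replace (det4 x (m 1%nat) (m 2%nat) (m 3%nat)) with (D * dot4 x (m 0%nat)) by lra.
    replace (det4 (m 0%nat) x (m 2%nat) (m 3%nat)) with (D * dot4 x (m 1%nat)) by lra.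
    replace (det4 (m 0%nat) (m 1%nat) x (m 3%nat)) with (D * dot4 x (m 2%nat)) by lra.
    replace (det4 (m 0%nat) (m 1%nat) (m 2%nat) x) with (D * dot4 x (m 3%nat)) by lra.
    ring.
  - rewrite HD. ring.
Qed.

Lemma dot4_kronecker_l i v : (i < 4)%nat -> dot4 (kronecker i) v = v i.
Proof. intro Hi. unfold dot4, kronecker. destruct i as [|[|[|[|i]]]]; cbn; try ring; lia. Qed.

Lemma dot4_comm x y : dot4 x y = dot4 y x.
Proof. unfold dot4. ring. Qed.

Lemma orthonormal4_transpose m : orthonormal4 m -> orthonormal4 (transpose4 m).
Proof.
  intros Hm i k Hi Hk.
  rewrite <- (dot4_kronecker_l k (kronecker i)) by exact Hk.
  rewrite (orthonormal4_parseval m Hm (kronecker k) (kronecker i)), !dot4_kronecker_l,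
    !(dot4_comm (m _) (kronecker i)), !dot4_kronecker_l by assumption.
  unfold dot4, transpose4. ring.
Qed.

(** * The dual quadrangle *)

Definition quad (x0 x1 x2 x3 : pt) (k : nat) : pt :=
  match k with 0%nat => x0 | 1%nat => x1 | 2%nat => x2 | _ => x3 end.

(* The matrix with columns a, b, c, d, where u_k = a_k + i b_k and v_k = c_k + i d_k. *)
Definition planar_frame (u v : nat -> pt) : nat -> nat -> R :=
  fun j k => match j with
             | 0%nat => px (u k) | 1%nat => py (u k) | 2%nat => px (v k) | _ => py (v k)
             end.

Definition rows_orthonormal (u v : nat -> pt) : Prop :=
  forall k l, (k < 4)%nat -> (l < 4)%nat -> pdot (u k) (u l) + pdot (v k) (v l) = kronecker k l.

Lemma rows_orthonormal_of_frame u v : orthonormal4 (planar_frame u v) -> rows_orthonormal u v.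
Proof.
  intros Hf k l Hk Hl. rewrite <- (orthonormal4_transpose _ Hf k l Hk Hl).
  unfold dot4, transpose4, planar_frame, pdot. ring.
Qed.

Lemma edges_sum_zero A B C D :
  padd (padd (z1 A B C D) (z2 A B C D)) (padd (z3 A B C D) (z4 A B C D)) = origin.
Proof. unfold z1, z2, z3, z4, origin. coords. f_equal; ring. Qed.

Lemma perimeter_dist A B C D : perimeter A B C D = dist B A + dist C B + dist D C + dist A D.
Proof. reflexivity. Qed.

Lemma sqrt_edges_orthonormal (u1 u2 u3 u4 : pt) :
  padd (padd (csq u1) (csq u2)) (padd (csq u3) (csq u4)) = origin ->
  pdot u1 u1 + pdot u2 u2 + pdot u3 u3 + pdot u4 u4 = 2 ->
  px u1 * px u1 + px u2 * px u2 + px u3 * px u3 + px u4 * px u4 = 1 /\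
  py u1 * py u1 + py u2 * py u2 + py u3 * py u3 + py u4 * py u4 = 1 /\
  px u1 * py u1 + px u2 * py u2 + px u3 * py u3 + px u4 * py u4 = 0.
Proof.
  intros Hsum Hnorm. unfold origin in Hsum. coords.
  injection Hsum as Hre Him. lra.
Qed.

Lemma dual_side u v k : rows_orthonormal u v -> (k < 4)%nat -> pdot (v k) (v k) = 1 - pdot (u k) (u k).
Proof. intros Hr Hk. specialize (Hr k k Hk Hk). unfold kronecker in Hr. rewrite Nat.eqb_refl in Hr. lra. Qed.

Lemma dual_orthogonal u v k l : rows_orthonormal u v -> (k < 4)%nat -> (l < 4)%nat -> k <> l ->
  pdot (v k) (v l) = - pdot (u k) (u l).
Proof.
  intros Hr Hk Hl Hkl. specialize (Hr k l Hk Hl). unfold kronecker in Hr.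
  rewrite (proj2 (Nat.eqb_neq k l) Hkl) in Hr. lra.
Qed.

Lemma dual_diagonal u v : rows_orthonormal u v ->
  pnorm (padd (csq (v 0%nat)) (csq (v 1%nat))) = pnorm (padd (csq (u 0%nat)) (csq (u 1%nat))).
Proof.
  intro Hr. apply pnorm_ext. rewrite !pdot_csq_add.
  rewrite !(dual_side u v) by (assumption || lia).
  rewrite (dual_orthogonal u v) by (assumption || lia). ring.
Qed.

Lemma dual_turns u v : rows_orthonormal u v ->
  cross (csq (v 0%nat)) (csq (v 1%nat)) * cross (csq (v 2%nat)) (csq (v 3%nat)) =
  cross (csq (u 0%nat)) (csq (u 1%nat)) * cross (csq (u 2%nat)) (csq (u 3%nat)).
Proof.
  intro Hr. rewrite !cross_csq.
  transitivity (4 * pdot (v 0%nat) (v 1%nat) * pdot (v 2%nat) (v 3%nat) *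
                (cross (v 0%nat) (v 1%nat) * cross (v 2%nat) (v 3%nat))); [ring|].
  transitivity (4 * pdot (u 0%nat) (u 1%nat) * pdot (u 2%nat) (u 3%nat) *
                (cross (u 0%nat) (u 1%nat) * cross (u 2%nat) (u 3%nat))); [|ring].
  rewrite !cross_mul_cross, !(dual_orthogonal u v) by (assumption || lia). ring.
Qed.

Lemma cross_diagonal_sides A B C D :
  cross (psub C A) (psub B A) * cross (psub C A) (psub D A) =
  - (cross (z1 A B C D) (z2 A B C D) * cross (z3 A B C D) (z4 A B C D)).
Proof. unfold z1, z2, z3, z4. coords. ring. Qed.

Lemma dist_csq X Y u : csq u = psub Y X -> dist Y X = pdot u u.
Proof. intro Hu. unfold dist. rewrite <- Hu. apply pnorm_csq. Qed.

Lemma psub_chain X Y Z : psub Z X = padd (psub Y X) (psub Z Y).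
Proof. coords. f_equal; ring. Qed.

Lemma dual_quad_shape A B C D K L M N :
  perimeter A B C D = 2 -> is_dual A B C D K L M N ->
  dist L K = 1 - dist B A /\ dist M L = 1 - dist C B /\ dist N M = 1 - dist D C /\
  dist K N = 1 - dist A D /\ dist M K = dist C A /\
  cross (psub M K) (psub L K) * cross (psub M K) (psub N K) =
  cross (psub C A) (psub B A) * cross (psub C A) (psub D A).
Proof.
  unfold is_dual; cbv zeta.
  intros Hper (u1 & u2 & u3 & u4 & Hz1 & Hz2 & Hz3 & Hz4 & _ & _ & _ & c1 & c2 & c3 & c4 & d1 & d2 & d3 & d4 &
               Hc & Hd & Hcd & Hca & Hcb & Hda & Hdb & HL & HM & HN & HK).
  pose proof (edges_sum_zero A B C D) as Hclosed.
  rewrite <- Hz1, <- Hz2, <- Hz3, <- Hz4 in Hclosed.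
  rewrite perimeter_dist, (dist_csq A B u1 Hz1), (dist_csq B C u2 Hz2), (dist_csq C D u3 Hz3),
    (dist_csq D A u4 Hz4) in Hper.
  destruct (sqrt_edges_orthonormal u1 u2 u3 u4 Hclosed Hper) as (Haa & Hbb & Hab).
  set (u := quad u1 u2 u3 u4). set (v := quad (c1, d1) (c2, d2) (c3, d3) (c4, d4)).
  assert (Hrows : rows_orthonormal u v).
  { apply rows_orthonormal_of_frame. intros j k Hj Hk. unfold dot4, planar_frame, kronecker, u, v, quad.
    destruct j as [|[|[|[|j]]]]; destruct k as [|[|[|[|k]]]]; try lia; cbn; lra. }
  rewrite (dist_csq K L _ (eq_sym HL)), (dist_csq L M _ (eq_sym HM)), (dist_csq M N _ (eq_sym HN)),
    (dist_csq N K _ (eq_sym HK)), (dist_csq A B u1 Hz1), (dist_csq B C u2 Hz2), (dist_csq C D u3 Hz3),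
    (dist_csq D A u4 Hz4).
  refine (conj (dual_side u v 0 Hrows _) (conj (dual_side u v 1 Hrows _)
           (conj (dual_side u v 2 Hrows _) (conj (dual_side u v 3 Hrows _) (conj _ _))))); try lia.
  - unfold dist. rewrite (psub_chain K L M), (psub_chain A B C), HL, HM.
    fold (z1 A B C D) (z2 A B C D). rewrite <- Hz1, <- Hz2. exact (dual_diagonal u v Hrows).
  - rewrite !cross_diagonal_sides. unfold z1, z2, z3, z4. rewrite HL, HM, HN, HK.
    fold (z1 A B C D) (z2 A B C D) (z3 A B C D) (z4 A B C D). rewrite <- Hz1, <- Hz2, <- Hz3, <- Hz4.
    f_equal. exact (dual_turns u v Hrows).
Qed.

Lemma convex_turns_same_sign A B C D : convex_quad A B C D ->
  0 < cross (z1 A B C D) (z2 A B C D) * cross (z3 A B C D) (z4 A B C D).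
Proof. intros (_ & _ & _ & [(h1 & h2 & h3 & h4) | (h1 & h2 & h3 & h4)]); nra. Qed.

Lemma convex_diagonal_separates A B C D : convex_quad A B C D ->
  cross (psub C A) (psub B A) * cross (psub C A) (psub D A) < 0.
Proof. intro Hconv. rewrite cross_diagonal_sides. pose proof (convex_turns_same_sign A B C D Hconv). lra. Qed.

Lemma convex_quad_triangles A B C D : convex_quad A B C D ->
  dist A C < dist A B + dist B C /\ dist A B < dist A C + dist B C /\ dist B C < dist A B + dist A C /\
  dist A C < dist C D + dist D A /\ dist C D < dist A C + dist D A /\ dist D A < dist A C + dist C D.
Proof.
  intro Hconv. pose proof (convex_diagonal_separates A B C D Hconv) as Hsep.
  destruct (triangle_strict A B C) as (T1 & T2 & T3); [intro E; rewrite E in Hsep; lra|].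
  destruct (triangle_strict A D C) as (T4 & T5 & T6); [intro E; rewrite E in Hsep; lra|].
  rewrite (dist_sym A D), (dist_sym D C) in T4, T5, T6. repeat split; lra.
Qed.

Lemma B1_D1_exist A B C D : convex_quad A B C D ->
  exists B1 D1 : pt, B1_spec A B C D B1 /\ D1_spec A B C D D1.
Proof.
  intro Hconv. pose proof (convex_diagonal_separates A B C D Hconv) as Hsep.
  destruct (convex_quad_triangles A B C D Hconv) as (T1 & T2 & T3 & T4 & T5 & T6).
  destruct (circles_meet A C ((dist B C + dist C D + dist D A - dist A B) / 2)
      ((dist A B + dist C D + dist D A - dist B C) / 2) (cross (psub C A) (psub B A)))
    as (B1 & HB1A & HB1C & HB1s); [lra | lra | lra | intro E; rewrite E in Hsep; lra |].
  destruct (circles_meet A C ((dist A B + dist B C + dist C D - dist D A) / 2)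
      ((dist A B + dist B C + dist D A - dist C D) / 2) (cross (psub C A) (psub D A)))
    as (D1 & HD1A & HD1C & HD1s); [lra | lra | lra | intro E; rewrite E in Hsep; lra |].
  exists B1, D1. split; repeat split; assumption.
Qed.

Lemma dual_congruent_AB1CD1 A B C D B1 D1 K L M N :
  convex_quad A B C D -> perimeter A B C D = 2 ->
  B1_spec A B C D B1 -> D1_spec A B C D D1 -> is_dual A B C D K L M N ->
  exists f : pt -> pt, isometry f /\ f K = A /\ f L = B1 /\ f M = C /\ f N = D1.
Proof.
  intros Hconv Hper (HB1s & HB1A & HB1C) (HD1s & HD1A & HD1C) Hdual.
  pose proof (convex_diagonal_separates A B C D Hconv) as Hsep.
  destruct (convex_quad_triangles A B C D Hconv) as (T1 & T2 & T3 & _).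
  destruct (dual_quad_shape A B C D K L M N Hper Hdual) as (HLK & HML & HNM & HKN & HMK & Hcross).
  rewrite perimeter_dist, (dist_sym B A), (dist_sym C B), (dist_sym D C), (dist_sym A D) in Hper.
  rewrite (dist_sym B A) in HLK. rewrite (dist_sym C B), (dist_sym M L) in HML.
  rewrite (dist_sym D C) in HNM. rewrite (dist_sym A D), (dist_sym K N) in HKN.
  unfold same_open_side in HB1s, HD1s.
  apply quadrangle_congruence; try lra.
  - rewrite dist_sym. lra.
  - nra.
Qed.

Theorem mainTheorem14 :
  forall A B C D : pt,
    nondegenerate A B C D ->
    convex_quad A B C D ->
    perimeter A B C D = 2 ->
    (exists B1 D1 : pt, B1_spec A B C D B1 /\ D1_spec A B C D D1) /\
    (forall B1 D1 K L M N : pt,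
        B1_spec A B C D B1 -> D1_spec A B C D D1 ->
        is_dual A B C D K L M N ->
        exists f : pt -> pt,
          isometry f /\ f K = A /\ f L = B1 /\ f M = C /\ f N = D1).
Proof.
  intros A B C D _ Hconv Hper. split.
  - exact (B1_D1_exist A B C D Hconv).
  - intros B1 D1 K L M N HB1 HD1 Hdual.
    exact (dual_congruent_AB1CD1 A B C D B1 D1 K L M N Hconv Hper HB1 HD1 Hdual).
Qed.
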